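(* As $n\to\infty$, $$(1+o(1))\frac{n}{2}\le g_{\mathrm{ECB}}(n,K_3)\le (1+o(1))\frac{2n}{3}.$$
   Context: Embedded Constructor-Blocker game: the vertices of $K_n$ are placed at the $n$-th roots of unity in the complex plane, and each edge is drawn as the straight chord inside the unit disk between its endpoints. Constructor and Blocker alternately claim previously unclaimed edges, Constructor moving first. Constructor may only claim an edge whose chord does not cross (in an interior point) any chord she has already claimed; Blocker may claim any unclaimed edge. The game ends when Constructor cannot claim any more edges or all edges are claimed. The score is the number of triangles in Constructor's graph at the end; Constructor maximizes it, Blocker minimizes it. $g_{\mathrm{ECB}}(n,K_3)$ denotes the score under optimal play. *)

From mathcomp Require Import all_boot all_order all_algebra.
Set Implicit Arguments. Unset Strict Implicit. Unset Printing Implicit Defensive.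

(* Vertices of K_n: 'I_n, vertex k placed at exp(2 pi i k / n).
   An edge {i,j} is represented by the ordered pair (i,j) with i < j. *)
Definition edges (n : nat) : {set 'I_n * 'I_n} := [set e : 'I_n * 'I_n | (e.1 < e.2)%N].

(* Two chords between points in convex position (the n-th roots of unity, in
   cyclic order 0,1,...,n-1) cross in an interior point iff their four
   endpoints are distinct and interleave in the cyclic order. *)
Definition cross (n : nat) (e f : 'I_n * 'I_n) : bool :=
  ((e.1 < f.1)%N && (f.1 < e.2)%N && (e.2 < f.2)%N) ||
  ((f.1 < e.1)%N && (e.1 < f.2)%N && (f.2 < e.2)%N).

Definition triangles (n : nat) (C : {set 'I_n * 'I_n}) : nat :=
  #|[set t : 'I_n * 'I_n * 'I_n |
      [&& (t.1.1, t.1.2) \in C, (t.1.2, t.2) \in C & (t.1.1, t.2) \in C]]|.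

(* Optimal-play value of the game from position (C, B) (Constructor's and
   Blocker's claimed edges), with [cturn] true iff Constructor is to move,
   [fuel] bounding the number of remaining moves. *)
Fixpoint ecb_value (n : nat) (fuel : nat) (cturn : bool)
    (C B : {set 'I_n * 'I_n}) : nat :=
  match fuel with
  | 0 => triangles C
  | k.+1 =>
    let avail := [set e in edges n | (e \notin C) && (e \notin B)] in
    let cmoves := [set e in avail | [forall f in C, ~~ cross e f]] in
    if cmoves == set0 then triangles C
    else if cturn then
      \max_(e in cmoves) ecb_value k false (e |: C) B
    else
      (* avail is nonempty here, so the initial value n^3 is never used *)
      \big[minn/n ^ 3]_(e in avail) ecb_value k true C (e |: B)
  end.

Definition g_ECB_K3 (n : nat) : nat :=
  @ecb_value n #|edges n| true set0 set0.

From mathcomp Require Import all_boot all_order all_algebra.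
From mathcomp Require Import zify lra.
Set Implicit Arguments. Unset Strict Implicit. Unset Printing Implicit Defensive.

(* Both bounds come from explicit strategies, analysed by induction on the game
   tree with a potential function.

   In a non-crossing graph on points in convex position, a triangle x < y < z is
   determined by its middle vertex y, and if Blocker owns the side {a, a+1} of
   the polygon, then a and a+1 cannot both be middle vertices.  Blocker claims
   the rightmost free side {a, a+1} sharing no vertex with his earlier sides,
   when there is one.  If M is the largest number of vertex-disjoint sides he
   owns and O the number of sides still available to him in this way, then
   3 M + O drops by at most one per Constructor move, rises by at least one per
   Blocker move while O > 0, starts at n - 1, and is at most 3 (n - triangles)
   at the end; hence 3 g <= 2 n + 2.

   Constructor answers every Blocker chord that none of her edges crosses by a
   chord crossing it, and otherwise claims a free side of the polygon.  At the
   end every chord crossing none of her edges is hers, so together with the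
   sides of the polygon her graph is a triangulation.  Its n - 2 triangles have
   distinct middle vertices, and each one missing from her graph contains a
   side owned by Blocker, which lies in no other triangle.  As she answers
   Blocker's sides with her own, he owns at most about half of the n sides,
   so 2 g >= n - 4. *)

Lemma bigmin_le (I : finType) (A : {pred I}) (F : I -> nat) x i :
  i \in A -> \big[minn/x]_(j in A) F j <= F i.
Proof.
move=> iA; have : i \in index_enum I by rewrite mem_index_enum.
elim: (index_enum I) => //= j r IHr; rewrite inE big_cons.
case/orP=> [/eqP <-|ir]; first by rewrite iA geq_minl.
by case: (j \in A); [apply: leq_trans (geq_minr _ _) (IHr ir) | exact: IHr].
Qed.

(** * Positions and moves *)

Section Game.
Variable n : nat.
Notation V := 'I_n.
Notation E := (V * V)%type.
Implicit Types (C B : {set E}) (e f : E).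

Lemma crossC e f : cross e f = cross f e.
Proof. by rewrite /cross; lia. Qed.

Lemma cross_irr e : cross e e = false.
Proof. by rewrite /cross; lia. Qed.

Definition uncrossed C e := [forall f in C, ~~ cross e f].

Lemma uncrossedP C e : reflect {in C, forall f, ~~ cross e f} (uncrossed C e).
Proof. exact: forall_inP. Qed.

Definition legal C B := [&& C \subset edges n, B \subset edges n,
  [forall e in C, e \notin B] & [forall e in C, uncrossed C e]].

Lemma legalP C B : legal C B ->
  [/\ {in C, forall e, e.1 < e.2}, {in B, forall e, e.1 < e.2},
      {in C, forall e, e \notin B} & {in C &, forall e f, cross e f = false}].
Proof.
case/and4P=> /subsetP sC /subsetP sB /forall_inP dCB /forall_inP nc; split.
- by move=> e /sC; rewrite inE.
- by move=> e /sB; rewrite inE.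
- exact: dCB.
- by move=> e f eC fC; apply/negbTE; move/uncrossedP: (nc e eC); apply.
Qed.

Definition free_edges C B := [set e in edges n | (e \notin C) && (e \notin B)].
Definition constructor_moves C B := [set e in free_edges C B | uncrossed C e].

Lemma free_edgesP C B e :
  (e \in free_edges C B) = [&& e \in edges n, e \notin C & e \notin B].
Proof. by rewrite inE. Qed.

Lemma constructor_movesP C B e : (e \in constructor_moves C B) =
  [&& e \in edges n, e \notin C, e \notin B & uncrossed C e].
Proof. by rewrite inE free_edgesP -!andbA. Qed.

Lemma constructor_moves_free C B : constructor_moves C B \subset free_edges C B.
Proof. by apply/subsetP => e; rewrite inE => /andP[]. Qed.

Lemma free_edges0 : free_edges set0 set0 = edges n.
Proof. by apply/setP => e; rewrite free_edgesP !inE andbT. Qed.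

Lemma free_edges_claim C B e : e \in free_edges C B ->
  free_edges (e |: C) B = free_edges C B :\ e /\
  free_edges C (e |: B) = free_edges C B :\ e.
Proof.
by move=> eF; split; apply/setP => f; rewrite !inE;
  case: (f =P e) => [->|]; rewrite ?andbF ?andbT.
Qed.

Lemma card_free_claim C B e k : e \in free_edges C B ->
  #|free_edges C B| <= k.+1 ->
  #|free_edges (e |: C) B| <= k /\ #|free_edges C (e |: B)| <= k.
Proof.
by move=> eF; case: (free_edges_claim eF) => -> ->; rewrite (cardsD1 e) eF.
Qed.

Lemma legal0 : legal set0 set0.
Proof.
by apply/and4P; split; rewrite ?sub0set //; apply/forall_inP => e; rewrite inE.
Qed.

Lemma legal_claimC C B e : legal C B -> e \in constructor_moves C B ->
  legal (e |: C) B.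
Proof.
case/and4P=> sC sB /forall_inP dCB /forall_inP nc.
rewrite constructor_movesP => /and4P[eE eC eB /uncrossedP ne].
apply/and4P; split; first by rewrite subUset sub1set eE.
- exact: sB.
- by apply/forall_inP => f; rewrite in_setU1 => /orP[/eqP ->|/dCB].
apply/forall_inP => f; rewrite in_setU1 => /orP[/eqP ->|fC]; apply/uncrossedP => g.
  by rewrite in_setU1 => /orP[/eqP ->|/ne//]; rewrite cross_irr.
rewrite in_setU1 => /orP[/eqP ->|gC]; first by rewrite crossC ne.
by move/uncrossedP: (nc f fC); apply.
Qed.

Lemma legal_claimB C B e : legal C B -> e \in free_edges C B ->
  legal C (e |: B).
Proof.
case/and4P=> sC sB /forall_inP dCB nc; rewrite free_edgesP => /and3P[eE eC eB].
apply/and4P; split => //; first by rewrite subUset sub1set eE.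
apply/forall_inP => f fC; rewrite in_setU1 negb_or dCB // andbT.
by apply: contraNneq eC => <-.
Qed.

Lemma ecb_valueS k c C B : ecb_value k.+1 c C B =
  if constructor_moves C B == set0 then triangles C
  else if c then \max_(e in constructor_moves C B) ecb_value k false (e |: C) B
  else \big[minn/n ^ 3]_(e in free_edges C B) ecb_value k true C (e |: B).
Proof. by []. Qed.

Lemma ecb_value_end k c C B : constructor_moves C B = set0 ->
  ecb_value k c C B = triangles C.
Proof. by case: k => [//|k] cm0; rewrite ecb_valueS cm0 eqxx. Qed.

Lemma ecb_value_constructor k C B : constructor_moves C B != set0 ->
  ecb_value k.+1 true C B =
    \max_(e in constructor_moves C B) ecb_value k false (e |: C) B.
Proof. by rewrite ecb_valueS => /negbTE ->. Qed.

Lemma ecb_value_blocker k C B : constructor_moves C B != set0 ->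
  ecb_value k.+1 false C B =
    \big[minn/n ^ 3]_(e in free_edges C B) ecb_value k true C (e |: B).
Proof. by rewrite ecb_valueS => /negbTE ->. Qed.

Lemma free_edges_neq0 C B : constructor_moves C B != set0 ->
  free_edges C B != set0.
Proof.
case/set0Pn=> e /(subsetP (constructor_moves_free C B)) eF.
by apply/set0Pn; exists e.
Qed.

End Game.

Section Polygon.
Variable n : nat.
Notation V := 'I_n.
Notation E := (V * V)%type.
Implicit Types (C : {set E}) (e f : E).

Definition path_edge e := e.2 == e.1.+1 :> nat.
Definition hull_edge e := path_edge e || (e.1 == 0 :> nat) && (e.2 == n.-1 :> nat).

Lemma hull_edge_cross e f : hull_edge e -> cross e f = false.
Proof.
case: e f => [a b] [p q]; rewrite /hull_edge /path_edge /cross /=.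
by have := ltn_ord q; have := ltn_ord b; lia.
Qed.

Lemma hull_edge_uncrossed C e : hull_edge e -> uncrossed C e.
Proof. by move=> he; apply/uncrossedP => f _; rewrite hull_edge_cross. Qed.

Lemma path_hull_edge e : path_edge e -> hull_edge e.
Proof. by rewrite /hull_edge => ->. Qed.

Definition middle C (y : V) :=
  [exists x, exists z, [&& (x, y) \in C, (y, z) \in C & (x, z) \in C]].

Lemma triangles_middles C : {in C, forall e, e.1 < e.2} ->
  {in C &, forall e f, cross e f = false} -> triangles C = #|[set y | middle C y]|.
Proof.
move=> lt nc; rewrite /triangles; set T := [set t : V * V * V | _].
have middle_inj : {in T &, injective (fun t : V * V * V => t.1.2)}.
  move=> [[x y] z] [[x' y'] z']; rewrite !inE /= => /and3P[h1 h2 h3] /and3P[h1' h2' h3'] eyy.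
  subst y'; have := lt _ h1; have := lt _ h2; have := lt _ h3.
  have := lt _ h1'; have := lt _ h2'; have := lt _ h3'.
  have := nc _ _ h3 h1'; have := nc _ _ h3' h1; have := nc _ _ h3 h2'; have := nc _ _ h3' h2.
  by rewrite /cross /= => *; congr (_, _, _); apply/val_inj => /=; lia.
rewrite -(card_in_imset middle_inj); apply: eq_card => y; rewrite inE.
apply/imsetP/existsP => [[t] | [x /existsP[z h]]]; last by exists (x, y, z); rewrite // inE.
rewrite inE => /and3P[h1 h2 h3] ->; exists t.1.1; apply/existsP; exists t.2.
by rewrite h1 h2 h3.
Qed.

End Polygon.

(** * Upper bound: Blocker's strategy *)

Section UpperBound.
Variable n : nat.
Notation V := 'I_n.
Notation E := (V * V)%type.
Implicit Types (C B S : {set E}) (e f : E).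

Lemma blocked_path_edge_middle C B e : legal C B -> e \in B -> path_edge e ->
  ~~ (middle C e.1 && middle C e.2).
Proof.
case: e => a b; rewrite /path_edge /= => /legalP[lt _ dj nc] eB /eqP ba.
apply/negP => /andP[/existsP[x /existsP[z /and3P[h1 h2 h3]]]].
move=> /existsP[x' /existsP[z' /and3P[h1' h2' h3']]].
have zb : z != b by apply: contraTneq h2 => ->; apply: contraTN eB => /dj.
have x'a : x' != a by apply: contraTneq h1' => ->; apply: contraTN eB => /dj.
have := lt _ h1; have := lt _ h2; have := lt _ h1'; have := lt _ h2'.
have := nc _ _ h1' h2; move: zb x'a; rewrite -!(inj_eq val_inj) /cross /=; lia.
Qed.

Definition vertex_disjoint e f := [&& e.1 != f.1, e.1 != f.2, e.2 != f.1 & e.2 != f.2].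

Definition path_matching B S := (S \subset [set e in B | path_edge e]) &&
  [forall e in S, forall f in S, (e != f) ==> vertex_disjoint e f].

Definition matching_number B := \max_(S | path_matching B S) #|S|.

Lemma matching_numberP B : {S | path_matching B S & matching_number B = #|S|}.
Proof.
have [|S SM SE] := @eq_bigmax_cond _ (path_matching B) (fun S => #|S|); last by exists S.
apply/card_gt0P; exists set0; rewrite unfold_in /= /path_matching sub0set.
by apply/forall_inP => f; rewrite inE.
Qed.

Lemma triangles_add_matching C B : legal C B -> triangles C + matching_number B <= n.
Proof.
move=> legCB; have [lt _ _ nc] := legalP legCB; rewrite triangles_middles //.
have [S /andP[/subsetP sS /forall_inP dS] ->] := matching_numberP B.
pose outer e : V := if middle C e.1 then e.2 else e.1.
have outer_inj : {in S &, injective outer}.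
  move=> e f eS fS; apply: contra_eq => ef.
  move: (dS e eS) => /forall_inP/(_ f fS); rewrite ef /= /vertex_disjoint.
  by case/and4P; rewrite /outer; case: ifP; case: ifP.
have outer_not_middle : {in S, forall e, ~~ middle C (outer e)}.
  move=> e /sS; rewrite inE => /andP[eB pe].
  by have := blocked_path_edge_middle legCB eB pe; rewrite /outer; case: ifP => //= ->.
have : [set y | middle C y] \subset ~: (outer @: S).
  apply/subsetP => y; rewrite !inE => my; apply/imsetP => -[e eS ye].
  by move: (outer_not_middle e eS); rewrite -ye my.
move/subset_leq_card => h; rewrite -(card_in_imset outer_inj).
by apply: leq_trans (leq_add h (leqnn _)) _; rewrite addnC cardsC card_ord.
Qed.

Lemma matching_number_claim B e : matching_number B <= matching_number (e |: B).
Proof.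
have [S /andP[sS dS] ->] := matching_numberP B; apply: leq_bigmax_cond.
rewrite /path_matching dS andbT; apply: subset_trans sS _.
by apply/subsetP => f; rewrite !inE => /andP[-> ->]; rewrite orbT.
Qed.

Definition open_path_edges C B := [set e in free_edges C B | path_edge e &&
  [forall f in B, path_edge f ==> vertex_disjoint e f]].

Lemma open_path_edgesP C B e : (e \in open_path_edges C B) =
  [&& e \in free_edges C B, path_edge e
    & [forall f in B, path_edge f ==> vertex_disjoint e f]].
Proof. by rewrite inE. Qed.

Lemma open_path_edges_moves C B : open_path_edges C B \subset constructor_moves C B.
Proof.
apply/subsetP => e; rewrite open_path_edgesP => /and3P[eF pe _].
by rewrite /constructor_moves in_set eF hull_edge_uncrossed ?path_hull_edge.
Qed.

Lemma open_path_edges_claimC C B e :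
  open_path_edges C B :\ e \subset open_path_edges (e |: C) B.
Proof.
apply/subsetP => f; rewrite in_setD1 !open_path_edgesP !free_edgesP in_setU1.
by case/andP=> /negbTE -> /=.
Qed.

Lemma open_path_edges_claimB C B e :
  open_path_edges C (e |: B) \subset open_path_edges C B.
Proof.
apply/subsetP => f; rewrite !open_path_edgesP !free_edgesP in_setU1 negb_or.
case/and3P=> /and3P[-> -> /andP[_ ->]] -> /forall_inP fB /=.
by apply/forall_inP => g gB; apply: fB; rewrite in_setU1 gB orbT.
Qed.

Lemma vertex_disjointC e f : vertex_disjoint e f = vertex_disjoint f e.
Proof. by apply/idP/idP => /and4P[*]; apply/and4P; split; rewrite eq_sym. Qed.

Lemma matching_number_open C B e : e \in open_path_edges C B ->
  (matching_number B).+1 <= matching_number (e |: B).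
Proof.
rewrite open_path_edgesP free_edgesP => /and3P[/and3P[_ _ eB] pe /forall_inP eBdisj].
have [S /andP[/subsetP sS /forall_inP dS] ->] := matching_numberP B.
have eS : e \notin S by apply: contra eB => /sS; rewrite inE => /andP[].
have eSdisj : {in S, forall f, vertex_disjoint e f}.
  by move=> f /sS; rewrite inE => /andP[fB pf]; move: (eBdisj f fB); rewrite pf.
have -> : #|S|.+1 = #|e |: S| by rewrite cardsU1 eS.
apply: leq_bigmax_cond; apply/andP; split.
  apply/subsetP => f; rewrite !inE => /orP[/eqP ->|/sS]; first by rewrite eqxx pe.
  by rewrite inE => /andP[-> ->]; rewrite orbT.
apply/forall_inP => f; rewrite in_setU1 => /orP[/eqP ->|fS];
  apply/forall_inP => g; rewrite in_setU1.
  by case/orP=> [/eqP ->|/eSdisj ->]; rewrite ?eqxx ?implybT.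
case/orP=> [/eqP ->|gS]; first by rewrite vertex_disjointC eSdisj ?implybT.
exact: (forall_inP (dS f fS) g gS).
Qed.

Lemma path_edges_disjoint e f : path_edge e -> path_edge f -> f != e ->
  f.1 <= e.1 -> f.2 != e.1 :> nat -> vertex_disjoint f e.
Proof.
case: e f => [a b] [c d]; rewrite /path_edge /vertex_disjoint /= xpair_eqE.
by rewrite -!(inj_eq val_inj) /=; lia.
Qed.

(* As e is the rightmost open side, claiming it closes only e and the side
   ending at e.1. *)
Lemma card_open_claim_rightmost C B e : e \in open_path_edges C B ->
  {in open_path_edges C B, forall g : E, g.1 <= e.1} ->
  #|open_path_edges C B| <= #|open_path_edges C (e |: B)| + 2.
Proof.
move=> eO emax; set X := [set g in open_path_edges C B | g.2 == e.1 :> nat].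
have X1 : #|X| <= 1.
  have XP g : (g \in X) = (g \in open_path_edges C B) && (g.2 == e.1 :> nat).
    by rewrite in_set.
  apply/card_le1_eqP => g h; rewrite !XP !open_path_edgesP.
  move=> /andP[/and3P[_ /eqP pg _] /eqP ge] /andP[/and3P[_ /eqP ph _] /eqP he].
  have e2 : h.2 = g.2 by apply/val_inj; rewrite /= he ge.
  have e1 : h.1 = g.1 by apply/val_inj/eqP; rewrite /= -eqSS -ph -pg e2.
  by rewrite [g]surjective_pairing [h]surjective_pairing e1 e2.
have : open_path_edges C B \subset (e |: X) :|: open_path_edges C (e |: B).
  apply/subsetP => g gO; rewrite in_setU in_setU1 inE gO /=.
  case: (g =P e) => //= /eqP ge; case: (g.2 =P e.1 :> nat) => //= /eqP g2.
  have g1 := emax g gO; move: gO eO; rewrite !open_path_edgesP !free_edgesP.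
  case/and3P=> /and3P[-> -> gB] pg /forall_inP gdisj /and3P[_ pe _].
  rewrite in_setU1 negb_or ge gB pg /=; apply/forall_inP => f; rewrite in_setU1.
  by case/orP=> [/eqP -> | /gdisj //]; rewrite pe path_edges_disjoint.
move/subset_leq_card/leq_trans; apply; rewrite cardsU.
apply: leq_trans (leq_subr _ _) _; rewrite cardsU1 addnC leq_add2l.
by apply: leq_trans (leq_add (leq_b1 _) X1) _.
Qed.

Definition potential C B := 3 * matching_number B + #|open_path_edges C B|.

Lemma potential_claimC C B e :
  potential C B <= potential (e |: C) B + (open_path_edges C B != set0).
Proof.
rewrite /potential -addnA leq_add2l.
apply: leq_trans (leq_add (subset_leq_card (open_path_edges_claimC C B e)) (leqnn _)).
rewrite (cardsD1 e) addnC leq_add2l; case: (boolP (e \in _)) => //= eO.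
by rewrite lt0b; apply/set0Pn; exists e.
Qed.

Lemma blocker_move_raises_potential C B : free_edges C B != set0 ->
  exists2 e, e \in free_edges C B &
    potential C B + (open_path_edges C (e |: B) != set0) <= potential C (e |: B).
Proof.
case/set0Pn=> e0 e0F; have [O0|/set0Pn[g gO]] := eqVneq (open_path_edges C B) set0.
  exists e0 => //; rewrite /potential; have -> : open_path_edges C (e0 |: B) = set0.
    by apply/eqP; rewrite -subset0 -O0 open_path_edges_claimB.
  by rewrite O0 eqxx cards0 !addn0 leq_mul2l matching_number_claim.
have [e eO emax] :=
  @arg_maxnP _ g (fun g => g \in open_path_edges C B) (fun g : E => val g.1) gO.
exists e; first by move: eO; rewrite open_path_edgesP => /andP[].
have := matching_number_open eO; have := card_open_claim_rightmost eO emax.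
rewrite /potential; set q := matching_number (e |: B); set o := #|open_path_edges C B|.
by set o' := #|open_path_edges C (e |: B)|; case: (_ != set0) => /=; lia.
Qed.

Lemma potential_end C B : legal C B -> constructor_moves C B = set0 ->
  open_path_edges C B = set0 /\ 3 * triangles C + potential C B <= 3 * n.
Proof.
move=> legCB cm0; have O0 : open_path_edges C B = set0.
  by apply/eqP; rewrite -subset0 -cm0 open_path_edges_moves.
by split=> //; rewrite /potential O0 cards0 addn0 -mulnDr leq_mul2l triangles_add_matching.
Qed.

Lemma upper_invariant k C B : legal C B -> #|free_edges C B| <= k ->
  3 * ecb_value k true C B + potential C B <= 3 * n + (open_path_edges C B != set0) /\
  3 * ecb_value k false C B + potential C B <= 3 * n.
Proof.
elim: k C B => [|k IH] C B legCB freek;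
  have [cm0|moves] := eqVneq (constructor_moves C B) set0.
- by rewrite !ecb_value_end //; have [_] := potential_end legCB cm0; lia.
- by move: freek; rewrite leqn0 cards_eq0 (negbTE (free_edges_neq0 moves)).
- by rewrite !ecb_value_end //; have [_] := potential_end legCB cm0; lia.
split.
  have moves_gt0 : 0 < #|constructor_moves C B| by rewrite card_gt0.
  rewrite ecb_value_constructor //.
  have [e eM ->] := eq_bigmax_cond (fun e => ecb_value k false (e |: C) B) moves_gt0.
  have eF := subsetP (constructor_moves_free C B) e eM.
  have [_] := IH (e |: C) B (legal_claimC legCB eM) (card_free_claim eF freek).1.
  by have := potential_claimC C B e; lia.
have [e eF pot_e] := blocker_move_raises_potential (free_edges_neq0 moves).
have [IHe _] := IH C (e |: B) (legal_claimB legCB eF) (card_free_claim eF freek).2.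
have := bigmin_le (fun f => ecb_value k true C (f |: B)) (n ^ 3) eF.
rewrite ecb_value_blocker //; move: pot_e IHe.
set m := \big[minn/_]_(_ in _) _; set v := ecb_value _ _ _ _; set p := potential C (e |: B).
by case: (_ != set0) => /=; lia.
Qed.

End UpperBound.

Lemma card_open_path_edges0 n : n.-1 <= #|@open_path_edges n set0 set0|.
Proof.
case: n => [//|m] /=.
pose f (i : 'I_m) : 'I_m.+1 * 'I_m.+1 := (widen_ord (leqnSn m) i, lift ord0 i).
have f_inj : injective f.
  by move=> i j /(congr1 (fun p => val p.1)) /= /val_inj.
rewrite -[X in X <= _]card_ord -(card_imset _ f_inj); apply/subset_leq_card/subsetP.
move=> _ /imsetP[i _ ->]; rewrite open_path_edgesP free_edgesP !inE /path_edge /= /bump /=.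
by rewrite add1n ltnSn eqxx /=; apply/forall_inP => g; rewrite inE.
Qed.

Lemma g_ECB_K3_upper n : 3 * g_ECB_K3 n <= 2 * n + 2.
Proof.
have [inv _] := upper_invariant (@legal0 n) (leqnn _).
move: inv; rewrite free_edges0 /g_ECB_K3 /potential.
by have := card_open_path_edges0 n; case: (_ != set0) => /=; lia.
Qed.

(** * Triangulations of the polygon *)

Lemma card_inner_vertices n : n - 2 <= #|[set y : 'I_n | 0 < y < n.-1]|.
Proof.
case: n => [//|m]; have -> : m.+1 - 2 = m.-1 by lia.
pose f (i : 'I_m.-1) : 'I_m.+1 := inord i.+1.
have f_val i : f i = i.+1 :> nat by rewrite inordK //; have := ltn_ord i; lia.
have f_inj : injective f.
  by move=> i j /(congr1 (@nat_of_ord _)); rewrite !f_val => -[] /val_inj.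
rewrite -[X in X <= _]card_ord -(card_imset _ f_inj); apply/subset_leq_card/subsetP.
by move=> _ /imsetP[i _ ->]; rewrite inE f_val; have := ltn_ord i; lia.
Qed.

Section Triangulation.
Variable n : nat.
Notation V := 'I_n.
Notation E := (V * V)%type.
Implicit Types (C : {set E}) (e f : E).

Lemma cross_triangle_base (x y z p q : V) : x < y < z -> p < q ->
  ~~ cross (x, y) (p, q) -> ~~ cross (y, z) (p, q) -> cross (x, z) (p, q) ->
  (p == y :> nat) && (z < q) || (q == y :> nat) && (p < x).
Proof. by rewrite /cross /=; lia. Qed.

Lemma cross_triangle_side (x y z p q : V) : x < y < z -> p < q ->
  ~~ cross (x, y) (p, q) -> ~~ cross (x, z) (p, q) -> cross (y, z) (p, q) ->
  (p == x :> nat) && (y < q < z).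
Proof. by rewrite /cross /=; lia. Qed.

Definition hull_graph C := [set e in edges n | (e \in C) || hull_edge e].

Lemma hull_graphP C e : (e \in hull_graph C) = (e.1 < e.2) && ((e \in C) || hull_edge e).
Proof. by rewrite !inE. Qed.

Definition hull_triangle C (x y z : V) :=
  [&& (x, y) \in hull_graph C, (y, z) \in hull_graph C & (x, z) \in hull_graph C].

Definition triangle_edges (x y z : V) : seq E := [:: (x, y); (y, z); (x, z)].

Definition missing_hull_edges C := [set e in edges n | hull_edge e && (e \notin C)].

Section Noncrossing.
Variable C : {set E}.
Hypothesis C_sorted : {in C, forall e, e.1 < e.2}.
Hypothesis C_noncrossing : {in C &, forall e f, cross e f = false}.

Lemma hull_graphW e : e \in C -> e \in hull_graph C.
Proof. by move=> eC; rewrite hull_graphP eC C_sorted. Qed.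

Lemma hull_graph_noncrossing : {in hull_graph C &, forall e f, cross e f = false}.
Proof.
move=> e f; rewrite !hull_graphP => /andP[_ /orP[eC|he]] /andP[_ /orP[fC|hf]].
- exact: C_noncrossing.
- by rewrite crossC hull_edge_cross.
- by rewrite hull_edge_cross.
- by rewrite hull_edge_cross.
Qed.

Lemma hull_edge_one_triangle x y z x' y' z' e :
  hull_triangle C x y z -> hull_triangle C x' y' z' -> hull_edge e ->
  e \in triangle_edges x y z -> e \in triangle_edges x' y' z' -> y = y'.
Proof.
move=> /and3P[a1 a2 a3] /and3P[b1 b2 b3].
have := hull_graph_noncrossing a1 b2; have := hull_graph_noncrossing a2 b1.
have := hull_graph_noncrossing a3 b3.
move: a1 a2 a3 b1 b2 b3; rewrite !hull_graphP /=.
move=> /andP[l1 _] /andP[l2 _] /andP[l3 _] /andP[l4 _] /andP[l5 _] /andP[l6 _].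
case: e => p q; rewrite /hull_edge /path_edge /cross /= !inE !xpair_eqE.
rewrite -!(inj_eq val_inj) /= => c1 c2 c3 he ee ee'.
apply/val_inj => /=; have := ltn_ord z; have := ltn_ord z'; move: he.
by case/or3P: ee => /andP[/eqP ? /eqP ?]; case/or3P: ee' => /andP[/eqP ? /eqP ?]; lia.
Qed.

Section Fan.
Variables a b w : V.
Hypothesis a_w_b : a < w < b.
Hypothesis ab_notin : (a, b) \notin C.
Hypothesis aw_hull : (a, w) \in hull_graph C.
Hypothesis w_max : forall u : V, a < u < b -> (a, u) \in hull_graph C -> u <= w.

Lemma fan_right (v : V) : b < v -> (a, v) \in hull_graph C ->
  (forall u : V, b < u -> (a, u) \in hull_graph C -> v <= u) -> uncrossed C (w, v).
Proof.
move=> bv av_hull v_min; apply/uncrossedP => -[p q] pq; apply/negP => cr.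
have awv : a < w < v by lia.
have /andP[/eqP pa /andP[wq qv]] := cross_triangle_side awv (C_sorted pq : p < q)
  (negbT (hull_graph_noncrossing aw_hull (hull_graphW pq)))
  (negbT (hull_graph_noncrossing av_hull (hull_graphW pq))) cr.
have aq_hull : (a, q) \in hull_graph C by rewrite -(val_inj pa) hull_graphW.
case: (ltngtP q b) => [qb|bq|/val_inj qb].
- have aqb : a < q < b by lia.
  by have := w_max aqb aq_hull; lia.
- by have := v_min q bq aq_hull; lia.
- by move: ab_notin; rewrite -qb -(val_inj pa) pq.
Qed.

Lemma fan_left (v : V) : v < a -> (v, a) \in hull_graph C ->
  (forall u : V, u < a -> (u, a) \in hull_graph C -> v <= u) ->
  (forall u : V, b < u -> (a, u) \notin hull_graph C) -> uncrossed C (v, w).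
Proof.
move=> va va_hull v_min a_last; apply/uncrossedP => -[p q] pq; apply/negP => cr.
have vaw : v < a < w by lia.
case/orP: (cross_triangle_base vaw (C_sorted pq : p < q)
  (negbT (hull_graph_noncrossing va_hull (hull_graphW pq)))
  (negbT (hull_graph_noncrossing aw_hull (hull_graphW pq))) cr).
  case/andP=> /eqP pa wq; have aq_hull : (a, q) \in hull_graph C.
    by rewrite -(val_inj pa) hull_graphW.
  case: (ltngtP q b) => [qb|bq|/val_inj qb].
  - have aqb : a < q < b by lia.
    by have := w_max aqb aq_hull; lia.
  - by move: (a_last q bq); rewrite aq_hull.
  - by move: ab_notin; rewrite -qb -(val_inj pa) pq.
case/andP=> /eqP qa pv; have pa_hull : (p, a) \in hull_graph C.
  by rewrite -(val_inj qa) hull_graphW.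
by have := v_min p (ltn_trans pv va) pa_hull; lia.
Qed.

End Fan.

(* The witness joins the last neighbour w of a before b in the hull graph to
   the first neighbour v of a after b, or, if there is none, the first
   neighbour of a in the hull graph. *)
Lemma chord_crossable e : e \in edges n -> ~~ hull_edge e -> e \notin C ->
  exists f, [&& f \in edges n, uncrossed C f & cross e f].
Proof.
case: e => a b; rewrite inE /= => ab; rewrite /hull_edge /path_edge /= => nh abC.
have bn := ltn_ord b; have a1n : a.+1 < n by lia.
have [|w /andP[awb aw_hull] w_max] := @arg_maxnP _ (Ordinal a1n)
    (fun u : V => (a < u < b) && ((a, u) \in hull_graph C)) val.
  by rewrite hull_graphP /hull_edge /path_edge /=; lia.
have {}w_max (u : V) : a < u < b -> (a, u) \in hull_graph C -> u <= w.
  by move=> aub au_hull; apply: w_max; rewrite aub.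
case: (pickP (fun u : V => (b < u) && ((a, u) \in hull_graph C))) => [u0 Pu0|a_last].
  have [v /andP[bv av_hull] v_min] :=
    @arg_minnP _ u0 (fun u : V => (b < u) && ((a, u) \in hull_graph C)) val Pu0.
  have {}v_min (u : V) : b < u -> (a, u) \in hull_graph C -> v <= u.
    by move=> bu au_hull; apply: v_min; rewrite bu.
  exists (w, v).
  by rewrite inE /= (fan_right awb abC aw_hull w_max bv av_hull v_min) /cross /=; lia.
have a0 : 0 < a.
  rewrite lt0n; apply/negP => /eqP a0; have n1 : n.-1 < n by lia.
  have := a_last (Ordinal n1); rewrite hull_graphP /hull_edge /path_edge /= a0.
  by move: nh; rewrite a0; lia.
have a1 : a.-1 < n by lia.
have [|v /andP[va va_hull] v_min] := @arg_minnP _ (Ordinal a1)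
    (fun u : V => (u < a) && ((u, a) \in hull_graph C)) val.
  by rewrite hull_graphP /hull_edge /path_edge /=; lia.
have {}v_min (u : V) : u < a -> (u, a) \in hull_graph C -> v <= u.
  by move=> ua ua_hull; apply: v_min; rewrite ua.
have {}a_last (u : V) : b < u -> (a, u) \notin hull_graph C.
  by move=> bu; apply/negP => au_hull; have := a_last u; rewrite bu au_hull.
exists (v, w).
by rewrite inE /= (fan_left awb abC aw_hull w_max va va_hull v_min a_last) /cross /=; lia.
Qed.

Section Saturated.
Hypothesis C_saturated :
  forall e, e \in edges n -> ~~ hull_edge e -> uncrossed C e -> e \in C.

Lemma hull_triangle_at (y : V) : 0 < y < n.-1 -> exists x z, hull_triangle C x y z.
Proof.
case/andP=> y0 yn; have yn' := ltn_ord y.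
have ym : y.-1 < n by lia.
have yp : y.+1 < n by lia.
have [|x /andP[xy xy_hull] x_min] := @arg_minnP _ (Ordinal ym)
    (fun u : V => (u < y) && ((u, y) \in hull_graph C)) val.
  by rewrite hull_graphP /hull_edge /path_edge /=; lia.
have [|z /andP[yz yz_hull] z_max] := @arg_maxnP _ (Ordinal yp)
    (fun u : V => (y < u) && ((y, u) \in hull_graph C)) val.
  by rewrite hull_graphP /hull_edge /path_edge /=; lia.
have xyz : x < y < z by rewrite xy yz.
exists x, z; rewrite /hull_triangle xy_hull yz_hull hull_graphP /= (ltn_trans xy yz) /=.
case: (boolP (hull_edge _)) => [_|nh]; first by rewrite orbT.
rewrite C_saturated //; first by rewrite inE /= (ltn_trans xy yz).
apply/uncrossedP => -[p q] pq; apply/negP => cr.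
case/orP: (cross_triangle_base xyz (C_sorted pq : p < q)
  (negbT (hull_graph_noncrossing xy_hull (hull_graphW pq)))
  (negbT (hull_graph_noncrossing yz_hull (hull_graphW pq))) cr).
  case/andP=> /eqP /val_inj py zq; subst p; have yq : y < q := C_sorted pq.
  by have := z_max q; rewrite yq hull_graphW // => /(_ isT) /=; lia.
case/andP=> /eqP /val_inj qy px; subst q; have py : p < y := C_sorted pq.
by have := x_min p; rewrite py hull_graphW // => /(_ isT) /=; lia.
Qed.

Lemma saturated_triangles : n - 2 <= triangles C + #|missing_hull_edges C|.
Proof.
pose kills (y : V) e := [exists x, exists z,
  [&& hull_triangle C x y z, e \in triangle_edges x y z & e \in missing_hull_edges C]].
set Bad := [set y : V | (0 < y < n.-1) && ~~ middle C y].
have kills_bad : {in Bad, forall y, exists e, kills y e}.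
  move=> y; rewrite inE => /andP[yin ym]; have [x [z xyz]] := hull_triangle_at yin.
  have [e ee eC] : exists2 e, e \in triangle_edges x y z & e \notin C.
    apply/hasP; apply: contraR ym => /hasPn allC; apply/existsP; exists x.
    by apply/existsP; exists z; apply/and3P; split; apply/negPn/allC; rewrite !inE eqxx ?orbT.
  have : e \in hull_graph C by case/and3P: xyz; move: ee; rewrite !inE => /or3P[] /eqP ->.
  rewrite hull_graphP (negbTE eC) /= => /andP[e12 he].
  exists e; apply/existsP; exists x; apply/existsP; exists z.
  by rewrite xyz ee !inE e12 he eC.
pose killer y := odflt (y, y) [pick e | kills y e].
have killerP : {in Bad, forall y, kills y (killer y)}.
  move=> y /kills_bad[e ke]; rewrite /killer; case: pickP => [//|/(_ e)].
  by rewrite ke.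
have killer_inj : {in Bad &, injective killer}.
  move=> y y' /killerP ky /killerP ky' same; move: ky; rewrite same.
  case/existsP=> x /existsP[z /and3P[t ee]]; rewrite inE => /and3P[_ he _].
  case/existsP: ky' => x' /existsP[z' /and3P[t' ee' _]].
  exact: hull_edge_one_triangle t t' he ee ee'.
have : #|Bad| <= #|missing_hull_edges C|.
  rewrite -(card_in_imset killer_inj); apply/subset_leq_card/subsetP.
  by move=> _ /imsetP[y /killerP /existsP[x /existsP[z /and3P[_ _ ?]]] ->].
have : [set y : V | 0 < y < n.-1] \subset [set y | middle C y] :|: Bad.
  by apply/subsetP => y; rewrite !inE; case: (middle C y); rewrite ?orbT ?andbT.
move/subset_leq_card/leq_trans/(_ (leq_card_setU _ _)).
rewrite (triangles_middles C_sorted C_noncrossing).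
by have := card_inner_vertices n; lia.
Qed.

End Saturated.

End Noncrossing.
End Triangulation.

(** * Lower bound: Constructor's strategy *)

Section LowerBound.
Variable n : nat.
Notation V := 'I_n.
Notation E := (V * V)%type.
Implicit Types (C B : {set E}) (e f : E).

Definition threats C B := [set e in B | ~~ hull_edge e && uncrossed C e].
Definition blocked_hull_edges B := #|[set e in B | hull_edge e]|.
Definition free_hull_edges C B := #|[set e in free_edges C B | hull_edge e]|.

Lemma threatsP C B e :
  (e \in threats C B) = [&& e \in B, ~~ hull_edge e & uncrossed C e].
Proof. by rewrite inE. Qed.

Lemma threats_claimC C B f : threats (f |: C) B \subset threats C B.
Proof.
apply/subsetP => e; rewrite !threatsP => /and3P[-> -> /uncrossedP ne] /=.
by apply/uncrossedP => g gC; apply: ne; rewrite in_setU1 gC orbT.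
Qed.

Lemma threats_claimB C B f : threats C (f |: B) \subset f |: threats C B.
Proof.
apply/subsetP => e; rewrite threatsP in_setU1 => /and3P[/orP[/eqP->|eB] he ne].
  by rewrite setU11.
by rewrite in_setU1 threatsP eB he ne orbT.
Qed.

Lemma threat_crossed C B e f : cross e f -> e \notin threats (f |: C) B.
Proof.
move=> ef; rewrite threatsP; apply/negP => /and3P[_ _ /uncrossedP/(_ f (setU11 f C))].
by rewrite ef.
Qed.

Lemma card_hull_claim (A : {set E}) e : e \in A ->
  #|[set x in A | hull_edge x]| = #|[set x in A :\ e | hull_edge x]| + hull_edge e.
Proof.
move=> eA; rewrite (cardsD1 e [set x in A | hull_edge x]) inE eA /= addnC.
by congr (_ + _); apply: eq_card => x; rewrite !inE andbA.
Qed.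

Lemma free_hull_edges_claim C B e : e \in free_edges C B ->
  free_hull_edges C B = free_hull_edges (e |: C) B + hull_edge e /\
  free_hull_edges C B = free_hull_edges C (e |: B) + hull_edge e.
Proof.
move=> eF; rewrite /free_hull_edges (card_hull_claim eF).
by case: (free_edges_claim eF) => -> ->.
Qed.

Lemma blocked_hull_edges_claim B e : e \notin B ->
  blocked_hull_edges (e |: B) = blocked_hull_edges B + hull_edge e.
Proof. by move=> eB; rewrite /blocked_hull_edges (card_hull_claim (setU11 e B)) setU1K. Qed.

Lemma threat_reply C B e : legal C B -> #|threats C B| <= 1 -> e \in threats C B ->
  exists2 f, f \in constructor_moves C B & cross e f.
Proof.
move=> legCB /card_le1_eqP U1 eU; have [lt _ dj nc] := legalP legCB.
move: (eU); rewrite threatsP => /and3P[eB he /uncrossedP ne].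
have eE : e \in edges n by case/and4P: legCB => _ /subsetP sB _ _; exact: sB.
have eC : e \notin C by apply/negP => /dj; rewrite eB.
have [f /and3P[fE nf ef]] := chord_crossable lt nc eE he eC.
exists f => //; rewrite constructor_movesP fE nf andbT /=; apply/andP; split.
  by apply: contraL ef => /ne.
apply/negP => fB; have fU : f \in threats C B.
  by rewrite threatsP fB nf andbT; apply: contraL ef => hf; rewrite crossC hull_edge_cross.
by move: ef; rewrite (U1 e f eU fU) cross_irr.
Qed.

Lemma lower_end C B : legal C B -> constructor_moves C B = set0 ->
  #|threats C B| <= 1 ->
  [/\ threats C B = set0, free_hull_edges C B = 0
    & n - 2 <= triangles C + blocked_hull_edges B].
Proof.
move=> legCB cm0 U1; have [lt _ dj nc] := legalP legCB.
have U0 : threats C B = set0.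
  apply/eqP/set0Pn => -[e eU]; have [f] := threat_reply legCB U1 eU.
  by rewrite cm0 inE.
have free0 e : e \in free_edges C B -> hull_edge e -> False.
  move=> eF he; suff : e \in constructor_moves C B by rewrite cm0 inE.
  by rewrite /constructor_moves inE eF hull_edge_uncrossed.
split=> //.
  by apply: eq_card0 => e; rewrite in_set; apply/negP => /andP[/free0].
have saturated e : e \in edges n -> ~~ hull_edge e -> uncrossed C e -> e \in C.
  move=> eE he ne; apply/negPn/negP => eC; case: (boolP (e \in B)) => eB.
    have : e \in threats C B by rewrite threatsP eB he ne.
    by rewrite U0 inE.
  have : e \in constructor_moves C B by rewrite constructor_movesP eE eC eB ne.
  by rewrite cm0 inE.
apply: leq_trans (saturated_triangles lt nc saturated) _; rewrite leq_add2l.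
apply/subset_leq_card/subsetP => e; rewrite !inE => /and3P[e12 he eC].
rewrite he andbT; apply/negPn/negP => eB; apply: (free0 e) => //.
by rewrite free_edgesP inE e12 eC.
Qed.

Lemma constructor_reply C B : legal C B -> #|threats C B| <= 1 ->
  constructor_moves C B != set0 ->
  exists2 e, e \in constructor_moves C B & threats (e |: C) B = set0 /\
    (free_hull_edges (e |: C) B).+1./2 <= (free_hull_edges C B + #|threats C B|)./2.
Proof.
move=> legCB U1 moves; have moves_free := subsetP (constructor_moves_free C B).
have [U0|/set0Pn[e eU]] := eqVneq (threats C B) set0; last first.
  have [f fM ef] := threat_reply legCB U1 eU; exists f => //; split.
    apply/eqP/set0Pn => -[x xU]; have xU0 := subsetP (threats_claimC C B f) x xU.
    move/card_le1_eqP: U1 => U1; move: xU; rewrite (U1 _ _ eU xU0).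
    by rewrite (negbTE (threat_crossed C B ef)).
  have hf : hull_edge f = false.
    by apply: contraTF ef => hf; rewrite crossC hull_edge_cross.
  have -> : #|threats C B| = 1.
    by apply/eqP; rewrite eqn_leq U1 card_gt0; apply/set0Pn; exists e.
  by have [-> _] := free_hull_edges_claim (moves_free f fM); rewrite hf addn0 addn1.
have threats0 e : threats (e |: C) B = set0.
  by apply/eqP; rewrite -subset0 -U0 threats_claimC.
rewrite U0 cards0 addn0.
case: (set_0Vmem [set x in free_edges C B | hull_edge x]) => [H0|[h]].
  case/set0Pn: moves => e eM; exists e => //; split=> //.
  have [fr_e _] := free_hull_edges_claim (moves_free e eM).
  move: fr_e; rewrite /free_hull_edges H0 cards0 => /esym/eqP.
  by rewrite addn_eq0 => /andP[/eqP -> _].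
rewrite in_set => /andP[hF hh].
have hM : h \in constructor_moves C B by rewrite /constructor_moves inE hF hull_edge_uncrossed.
exists h => //; split=> //.
by have [-> _] := free_hull_edges_claim hF; rewrite hh addn1.
Qed.

Lemma blocker_claim_bound C B e : threats C B = set0 -> e \in free_edges C B ->
  #|threats C (e |: B)| <= 1 /\
  blocked_hull_edges (e |: B) + (free_hull_edges C (e |: B) + #|threats C (e |: B)|)./2
    <= blocked_hull_edges B + (free_hull_edges C B).+1./2.
Proof.
move=> U0 eF; have eB : e \notin B by move: eF; rewrite free_edgesP => /and3P[].
have Ue : threats C (e |: B) \subset [set e].
  by have := threats_claimB C B e; rewrite U0 setU0.
have U1 : #|threats C (e |: B)| <= 1 by rewrite -(cards1 e) subset_leq_card.
split=> //; have [_ ->] := free_hull_edges_claim eF.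
rewrite blocked_hull_edges_claim //; case: (boolP (hull_edge e)) => he /=.
  have -> : threats C (e |: B) = set0.
    apply/eqP/set0Pn => -[x xU]; move: (subsetP Ue x xU) (xU); rewrite inE => /eqP ->.
    by rewrite threatsP he andbF.
  by rewrite cards0 !addn0 addn1 /= addn1 addnS.
by rewrite !addn0 leq_add2l uphalfE half_leq // -addn1 leq_add2l.
Qed.

(* Blocker's sides count fully but the free sides only half, since
   Constructor answers each side Blocker claims by claiming one herself. *)
Lemma lower_invariant k C B : legal C B -> #|free_edges C B| <= k ->
  (#|threats C B| <= 1 -> n - 2 <= ecb_value k true C B + blocked_hull_edges B +
     (free_hull_edges C B + #|threats C B|)./2) /\
  (threats C B = set0 -> n - 2 <= ecb_value k false C B + blocked_hull_edges B +
     (free_hull_edges C B).+1./2).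
Proof.
elim: k C B => [|k IH] C B legCB freek;
  have [cm0|moves] := eqVneq (constructor_moves C B) set0.
- rewrite !ecb_value_end //; split=> [U1|U0];
    [|have U1 : #|threats C B| <= 1 by rewrite U0 cards0];
    by have [_ _ h] := lower_end legCB cm0 U1; apply: leq_trans h (leq_addr _ _).
- by move: freek; rewrite leqn0 cards_eq0 (negbTE (free_edges_neq0 moves)).
- rewrite !ecb_value_end //; split=> [U1|U0];
    [|have U1 : #|threats C B| <= 1 by rewrite U0 cards0];
    by have [_ _ h] := lower_end legCB cm0 U1; apply: leq_trans h (leq_addr _ _).
split=> [U1|U0].
  have [e eM [U0' fr_e]] := constructor_reply legCB U1 moves.
  have eF := subsetP (constructor_moves_free C B) e eM.
  have [_ IHe] := IH (e |: C) B (legal_claimC legCB eM) (card_free_claim eF freek).1.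
  have : ecb_value k false (e |: C) B <= ecb_value k.+1 true C B.
    rewrite ecb_value_constructor //.
    exact: (@leq_bigmax_cond _ (mem (constructor_moves C B))
                             (fun f => ecb_value k false (f |: C) B)).
  move: (IHe U0') fr_e; set v := ecb_value k false _ _; set w := ecb_value k.+1 _ _ _.
  by set x := (_ + #|_|)./2; set y := (_.+1)./2; lia.
rewrite ecb_value_blocker // -addnA.
apply: (big_ind (fun m => n - 2 <= m + _)) => [|x y hx hy|e eF].
- apply: leq_trans (leq_addr _ _); apply: leq_trans (leq_subr 2 n) _.
  by case: (posnP n) => [->//|n0]; rewrite -{1}(expn1 n) leq_pexp2l.
- by rewrite addn_minl leq_min hx hy.
have [IHe _] := IH C (e |: B) (legal_claimB legCB eF) (card_free_claim eF freek).2.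
have [U1 bound] := blocker_claim_bound U0 eF.
by apply: leq_trans (IHe U1) _; rewrite -addnA leq_add2l.
Qed.

End LowerBound.

Lemma card_hull_edges n : #|[set e in edges n | hull_edge e]| <= n.
Proof.
pose h (e : 'I_n * 'I_n) := if path_edge e then e.1 else e.2.
have h_inj : {in [set e in edges n | hull_edge e] &, injective h}.
  move=> [a b] [c d]; rewrite !inE /h /hull_edge /path_edge /=.
  move=> /andP[ab hab] /andP[cd hcd].
  have := ltn_ord b; have := ltn_ord d.
  case: ifP => e1; case: ifP => e2 => bn dn /(congr1 (@nat_of_ord _)) /= hh;
    by congr (_, _); apply/val_inj => /=; move: hab hcd e1 e2; lia.
by rewrite -(card_in_imset h_inj) -[X in _ <= X]card_ord max_card.
Qed.

Lemma g_ECB_K3_lower n : n <= 2 * g_ECB_K3 n + 4.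
Proof.
have [inv _] := lower_invariant (@legal0 n) (leqnn _).
have U0 : threats (set0 : {set 'I_n * 'I_n}) set0 = set0.
  by apply/setP => e; rewrite threatsP !inE.
have B0 : blocked_hull_edges (set0 : {set 'I_n * 'I_n}) = 0.
  by apply: eq_card0 => e; rewrite !inE.
have free_hull : free_hull_edges (set0 : {set 'I_n * 'I_n}) set0 <= n.
  by rewrite /free_hull_edges free_edges0 card_hull_edges.
move: inv; rewrite U0 cards0 B0 addn0 free_edges0 /g_ECB_K3 => /(_ isT).
have := half_leq free_hull; have := odd_double_half n; rewrite -muln2.
by case: (odd n) => /=; lia.
Qed.

Import Order.TTheory GRing.Theory Num.Theory.
Local Open Scope ring_scope.

Theorem theorem1p7 :
  forall eps : rat, 0 < eps ->
  exists N : nat, forall n : nat, (N <= n)%N ->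
    (1 - eps) * (n%:R / 2) <= (g_ECB_K3 n)%:R /\
    (g_ECB_K3 n)%:R <= (1 + eps) * (2 * n%:R / 3).
Proof.
move=> eps eps_gt0; exists (Num.truncn (4 / eps)).+1 => n le_N_n.
have eps_n : 4 <= eps * n%:R.
  have : 4 / eps < n%:R by apply: lt_le_trans (truncnS_gt _) _; rewrite ler_nat.
  by rewrite ltr_pdivrMr // mulrC => /ltW.
have lower : (n%:R : rat) <= 2 * (g_ECB_K3 n)%:R + 4.
  by have := g_ECB_K3_lower n; rewrite -(ler_nat rat) natrD natrM.
have upper : 3 * (g_ECB_K3 n)%:R <= 2 * (n%:R : rat) + 2.
  by have := g_ECB_K3_upper n; rewrite -(ler_nat rat) natrD !natrM.
move: eps_n lower upper; set x : rat := n%:R; set g : rat := (g_ECB_K3 n)%:R.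
by move=> *; split; nra.
Qed.
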